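(* Let $d,l,m\geq1$ and let $\mathcal{Q}=\{P_1,\dots,P_l\}$ be a measurement scheme of POVMs on $\mathbb{C}^d$ with outcome set $\{1,\dots,m\}$. Then $\mathcal{Q}$ determines any pure state among all states if and only if every non-zero element of $\ker M_{\mathcal{Q}}$ has at least two (counted with multiplicity) positive eigenvalues.
   Context: $H(d)$ is the real vector space of $d\times d$ complex Hermitian matrices. A POVM with outcome set $\{1,\dots,m\}$ is a map $j\mapsto P(j)\in H(d)$ with $P(j)\geq0$ and $\sum_j P(j)=\mathbb{1}$. The scheme induces the real-linear map $M_{\mathcal{Q}}:H(d)\to M_{lm}(\mathbb{R})$, $M_{\mathcal{Q}}(X)_{i,j}=\mathrm{tr}(XP_i(j))$. A state is a positive semidefinite trace-one matrix; a pure state is a rank-one state. $\mathcal{Q}$ determines any pure state among all states if for every pure state $\sigma$ and every state $\varrho$, $M_{\mathcal{Q}}(\sigma)=M_{\mathcal{Q}}(\varrho)$ implies $\varrho=\sigma$. *)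

From HB Require Import structures.
From mathcomp Require Import all_boot all_order all_algebra.
From mathcomp Require Import reals.
From mathcomp.real_closed Require Import complex.
Set Implicit Arguments. Unset Strict Implicit. Unset Printing Implicit Defensive.
Import Order.TTheory GRing.Theory Num.Theory.
Local Open Scope ring_scope.

Section Defs.
Variable (R : realType).
Local Notation C := R[i].

Definition adjmx (p q : nat) (A : 'M[C]_(p, q)) : 'M[C]_(q, p) :=
  map_mx Num.conj (A^T).

Definition hermitian (d : nat) (A : 'M[C]_d) : Prop := adjmx A = A.

Definition psd (d : nat) (A : 'M[C]_d) : Prop :=
  hermitian A /\ forall v : 'cV[C]_d, 0 <= (adjmx v *m A *m v) 0 0.

Definition state (d : nat) (A : 'M[C]_d) : Prop := psd A /\ \tr A = 1.

Definition pure_state (d : nat) (A : 'M[C]_d) : Prop :=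
  state A /\ \rank A = 1%N.

Definition povm (d m : nat) (P : 'I_m -> 'M[C]_d) : Prop :=
  (forall j, psd (P j)) /\ \sum_(j < m) P j = 1%:M.

Definition scheme (d l m : nat) (Q : 'I_l -> 'I_m -> 'M[C]_d) : Prop :=
  forall i, povm (Q i).

Definition MQ (d l m : nat) (Q : 'I_l -> 'I_m -> 'M[C]_d) (X : 'M[C]_d)
  : 'M[C]_(l, m) := \matrix_(i < l, j < m) \tr (X *m Q i j).

Definition determines_pure (d l m : nat) (Q : 'I_l -> 'I_m -> 'M[C]_d) : Prop :=
  forall sigma rho : 'M[C]_d, pure_state sigma -> state rho ->
    MQ Q sigma = MQ Q rho -> rho = sigma.

(* The kernel of M_Q as a real-linear map on H(d) *)
Definition in_ker_MQ (d l m : nat) (Q : 'I_l -> 'I_m -> 'M[C]_d) (X : 'M[C]_d)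
  : Prop := hermitian X /\ MQ Q X = 0.

(* X has at least k positive eigenvalues counted with multiplicity:
   the eigenvalues with multiplicity are the roots (with multiplicity) of the
   characteristic polynomial, listed as a sequence s. *)
Definition at_least_pos_eigs (d : nat) (k : nat) (X : 'M[C]_d) : Prop :=
  exists s : seq C, char_poly X = \prod_(a <- s) ('X - a%:P) /\
                    (k <= count (fun a : C => (0 < a)%R) s)%N.
End Defs.

(* Write a hermitian X as P^* diag(D) P with P unitary.  If X is a nonzero
   element of ker M_Q with at most one positive eigenvalue D_k > 0, then
   tr X = 0 (each POVM sums to 1) forces X = D_k (sigma - rho), where sigma is
   the eigenprojection of D_k and rho = sigma - X / D_k is a state: sigma and
   rho have the same statistics, so Q does not determine sigma.  Conversely, if
   a pure sigma and a state rho have the same statistics, sigma - rho lies in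
   ker M_Q, and its positive eigenvectors span a space on which
   v^* (sigma - rho) v > 0; this space meets ker sigma unless its dimension is at
   most rank sigma = 1, and on ker sigma the form is -v^* rho v <= 0. *)

From Pilot Require Import Defs.
From HB Require Import structures.
From mathcomp Require Import all_boot all_order all_algebra.
From mathcomp Require Import reals.
From mathcomp.real_closed Require Import complex.
From mathcomp Require Import sesquilinear spectral.
(* [sesquilinear] defines its own [hermitian]; give precedence back to [Defs]. *)
Import Defs.
Import Order.TTheory GRing.Theory Num.Theory.
Set Implicit Arguments. Unset Strict Implicit. Unset Printing Implicit Defensive.
Local Open Scope ring_scope.

Lemma char_poly_similar (R : comUnitRingType) n (A P : 'M[R]_n) :
  P \in unitmx -> char_poly (invmx P *m A *m P) = char_poly A.
Proof.
move=> Pu; rewrite /char_poly /char_poly_mx.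
have -> : 'X%:M - map_mx polyC (invmx P *m A *m P) =
    map_mx polyC (invmx P) *m ('X%:M - map_mx polyC A) *m map_mx polyC P.
  rewrite mulmxBr mulmxBl !map_mxM -!mulmxA; congr (_ - _).
  by rewrite mul_scalar_mx -scalemxAr -map_mxM mulVmx // map_mx1 scalemx1.
by rewrite !det_mulmx mulrC mulrA -det_mulmx -map_mxM mulmxV // map_mx1 det1 mul1r.
Qed.

Lemma col_ker_nz (F : fieldType) p n (B : 'M[F]_(p, n)) :
  (\rank B < n)%N -> exists2 z : 'cV[F]_n, z != 0 & B *m z = 0.
Proof.
move=> rB; pose K := kermx B^T.
have K0 : K != 0 by rewrite -mxrank_eq0 mxrank_ker mxrank_tr -lt0n subn_gt0.
exists (nz_row K)^T; first by rewrite trmx_eq0 nz_row_eq0.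
by rewrite -[B]trmxK -trmx_mul (sub_kermxP (nz_row_sub K)) trmx0.
Qed.

Section QuantumStates.
Variable R : realType.
Local Notation C := R[i].
Local Open Scope sesquilinear_scope.

Definition qform n (A : 'M[C]_n) (v : 'cV[C]_n) : C := (adjmx v *m A *m v) 0 0.

Definition num_pos n (D : 'rV[C]_n) : nat := #|[pred i | 0 < D 0 i]|.

Definition diag_conj n (P : 'M[C]_n) (D : 'rV[C]_n) : 'M[C]_n :=
  P ^t* *m diag_mx D *m P.

Lemma adjmxE p q (A : 'M[C]_(p, q)) : adjmx A = A ^t*.
Proof. by []. Qed.

Lemma adjmxM p q r (A : 'M[C]_(p, q)) (B : 'M[C]_(q, r)) :
  adjmx (A *m B) = adjmx B *m adjmx A.
Proof. by rewrite /adjmx trmx_mul map_mxM. Qed.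

Lemma hermitianP n (X : 'M[C]_n) : hermitian X <-> X \is hermsymmx.
Proof.
rewrite /hermitian adjmxE; split => [HX|/is_hermitianmxP HX].
  by apply/is_hermitianmxP; rewrite expr0 scale1r HX.
by rewrite {2}HX expr0 scale1r.
Qed.

Lemma hermitianB n (A B : 'M[C]_n) :
  hermitian A -> hermitian B -> hermitian (A - B).
Proof.
by rewrite /hermitian /adjmx => hA hB; rewrite linearB map_mxB /= hA hB.
Qed.

Lemma qformB n (A B : 'M[C]_n) v : qform (A - B) v = qform A v - qform B v.
Proof. by rewrite /qform mulmxBr mulmxBl !mxE. Qed.

Lemma qform_ker n (A : 'M[C]_n) v : A *m v = 0 -> qform A v = 0.
Proof. by move=> Av; rewrite /qform -mulmxA Av mulmx0 mxE. Qed.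

Lemma hermitian_spectral n (X : 'M[C]_n) : hermitian X ->
  exists (P : 'M[C]_n) (D : 'rV[C]_n),
    [/\ P \is unitarymx, forall i, D 0 i \is Num.real & X = diag_conj P D].
Proof.
move=> /hermitianP HX; exists (spectralmx X), (spectral_diag X); split.
- exact: spectral_unitarymx.
- by move=> i; apply: (mxOverP (hermitian_spectral_diag_real HX)).
- have /orthomx_spectralP {1}-> := hermitian_normalmx HX.
  by rewrite invmx_unitary ?spectral_unitarymx.
Qed.

Section DiagConj.
Variables (n : nat) (P : 'M[C]_n).
Hypothesis Pu : P \is unitarymx.

Lemma diag_conjB (D E : 'rV[C]_n) :
  diag_conj P (D - E) = diag_conj P D - diag_conj P E.
Proof. by rewrite /diag_conj linearB /= mulmxBr mulmxBl. Qed.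

Lemma diag_conjZ a (D : 'rV[C]_n) : diag_conj P (a *: D) = a *: diag_conj P D.
Proof. by rewrite /diag_conj linearZ /= -scalemxAr -scalemxAl. Qed.

Lemma mxtrace_diag_conj (D : 'rV[C]_n) : \tr (diag_conj P D) = \sum_i D 0 i.
Proof.
by rewrite /diag_conj mxtrace_mulC mulmxA (unitarymxP Pu) mul1mx mxtrace_diag.
Qed.

Lemma mxrank_diag_conj (D : 'rV[C]_n) :
  \rank (diag_conj P D) = \rank (diag_mx D).
Proof.
rewrite mxrankMfree ?row_free_unit ?unitarymx_unit // -mxrank_tr trmx_mul.
rewrite mxrankMfree ?mxrank_tr // row_free_unit unitmx_tr.
by rewrite unitarymx_unit // trmxC_unitary.
Qed.

Lemma char_poly_diag_conj (D : 'rV[C]_n) :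
  char_poly (diag_conj P D) =
    \prod_(a <- [seq D 0 i | i <- index_enum 'I_n]) ('X - a%:P).
Proof.
rewrite /diag_conj -invmx_unitary // char_poly_similar ?unitarymx_unit //.
rewrite char_poly_trig ?diag_mx_is_trig // big_map.
by apply: eq_bigr => i _; rewrite mxE eqxx mulr1n.
Qed.

Lemma at_least_pos_eigs_diag_conj k (D : 'rV[C]_n) :
  at_least_pos_eigs k (diag_conj P D) <-> (k <= num_pos D)%N.
Proof.
rewrite /num_pos -sum1_card sum1_count -(count_map (D 0)); split.
  move=> [s []]; rewrite char_poly_diag_conj.
  by move=> /esym/prod_XsubC_eq/permP ->.
by move=> posD; exists [seq D 0 i | i <- index_enum 'I_n]; rewrite char_poly_diag_conj.
Qed.

Lemma qform_diag_conj (D : 'rV[C]_n) v :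
  qform (diag_conj P D) v = \sum_i D 0 i * `|(P *m v) i 0| ^+ 2.
Proof.
rewrite /qform /diag_conj !mulmxA -mulmxA -adjmxM -mulmxA mul_diag_mx mxE.
by apply: eq_bigr => i _; rewrite !mxE normCKC mulrCA.
Qed.

Lemma hermitian_diag_conj (D : 'rV[C]_n) :
  (forall i, D 0 i \is Num.real) -> hermitian (diag_conj P D).
Proof.
move=> Dreal; rewrite /hermitian /diag_conj !adjmxM !adjmxE trmxCK -mulmxA.
congr (_ *m (_ *m _)); rewrite tr_diag_mx map_diag_mx; congr diag_mx.
by apply/rowP => i; rewrite !mxE; apply: conj_Creal.
Qed.

Lemma psd_diag_conj (D : 'rV[C]_n) :
  (forall i, 0 <= D 0 i) -> psd (diag_conj P D).
Proof.
move=> Dge0; split; first by apply: hermitian_diag_conj => i; apply: ger0_real.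
move=> v; change (0 <= qform (diag_conj P D) v).
by rewrite qform_diag_conj sumr_ge0 // => i _; rewrite mulr_ge0 ?exprn_ge0.
Qed.

Lemma ker_pos_qform (S : 'M[C]_n) (D : 'rV[C]_n) :
  (\rank S < num_pos D)%N ->
  exists2 v, S *m v = 0 & 0 < qform (diag_conj P D) v.
Proof.
rewrite /num_pos; set A := [pred i | 0 < D 0 i] => rankS.
(* E z is the vector with coordinates z on the indices in A and 0 elsewhere. *)
pose E : 'M[C]_(n, #|A|) := \matrix_(i, j) (i == enum_val j)%:R.
have [z z0 Sz] : exists2 z : 'cV_#|A|, z != 0 & S *m P ^t* *m E *m z = 0.
  apply: col_ker_nz; rewrite (leq_ltn_trans _ rankS) //.
  by rewrite (leq_trans (mxrankM_maxl _ _)) ?mxrankM_maxl.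
have Ez_enum j : (E *m z) (enum_val j) 0 = z j 0.
  rewrite mxE (bigD1 j) //= big1 => [|j' nj]; first by rewrite !mxE eqxx mul1r addr0.
  by rewrite mxE (inj_eq enum_val_inj) eq_sym (negbTE nj) mul0r.
have Ez_out i : ~~ A i -> (E *m z) i 0 = 0.
  move=> Ai; rewrite mxE big1 // => j _; rewrite mxE.
  have /negbTE -> : i != enum_val j.
    by apply: contraNneq Ai => ->; exact: (enum_valP j).
  by rewrite mul0r.
have [j zj] : exists j, z j 0 != 0.
  case: (pickP (fun j => z j 0 != 0)) => [j zj|zE]; first by exists j.
  by case/eqP: z0; apply/matrixP => j i; rewrite ord1 mxE; apply/eqP/negbFE/zE.
exists (P ^t* *m (E *m z)); first by rewrite !mulmxA.
rewrite qform_diag_conj mulmxA (unitarymxP Pu) mul1mx (bigD1 (enum_val j)) //=.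
rewrite ltr_wpDr ?sumr_ge0 //.
- move=> i _; have [Ai|Ai] := boolP (A i).
    by rewrite mulr_ge0 ?(ltW Ai) ?exprn_ge0.
  by rewrite Ez_out // normr0 expr0n mulr0.
- by rewrite Ez_enum mulr_gt0 ?exprn_gt0 ?normr_gt0 //; exact: (enum_valP j).
Qed.

Lemma pure_sub_state_decomposition (D : 'rV[C]_n) :
    (forall i, D 0 i \is Num.real) -> \sum_i D 0 i = 0 -> D != 0 ->
    (num_pos D <= 1)%N ->
  exists a sigma rho, [/\ a != 0, pure_state sigma, state rho
                        & diag_conj P D = a *: (sigma - rho)].
Proof.
move=> Dreal sumD D0 pos1.
have Dle0 i : ~~ (0 < D 0 i) -> D 0 i <= 0 by rewrite real_leNgt ?Dreal.
have [k Dk_gt0 | Dle] := pickP [pred i | 0 < D 0 i]; last first.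
  case/eqP: D0; apply/rowP => i; rewrite mxE.
  apply/eqP; rewrite -oppr_eq0; apply/eqP.
  apply: (psumr_eq0P (P := predT) (F := fun i => - D 0 i)) => // [j _|].
    by rewrite oppr_ge0 Dle0 //; apply/negbT/Dle.
  by rewrite sumrN sumD oppr0.
have Dneg i : i != k -> D 0 i <= 0.
  move=> ik; apply: Dle0; apply: contra ik => Di.
  exact/eqP/(card_le1_eqP pos1).
set a := D 0 k; have a0 : a != 0 by rewrite gt_eqF.
pose sigma := diag_conj P ('e_k).
pose rho := diag_conj P ('e_k - a^-1 *: D).
have tr_sigma : \tr sigma = 1.
  rewrite mxtrace_diag_conj (bigD1 k) //= big1 => [|i ik].
    by rewrite mxE !eqxx addr0.
  by rewrite mxE (negbTE ik).
exists a, sigma, rho; split => //.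
- split; first split => //.
  + by apply: psd_diag_conj => i; rewrite mxE ler0n.
  + rewrite mxrank_diag_conj (_ : diag_mx _ = delta_mx k k) ?mxrank_delta //.
    apply/matrixP => i j; rewrite !mxE eqxx /=.
    by have [->|_] := eqVneq i k; [rewrite eq_sym | rewrite mul0rn].
- split.
  + apply: psd_diag_conj => i; rewrite !mxE; have [->|ik] := eqVneq i k.
      by rewrite eqxx mulVf ?subrr.
    by rewrite andbF sub0r -mulrN mulr_ge0 ?invr_ge0 ?oppr_ge0 ?Dneg ?ltW.
  + rewrite /rho diag_conjB diag_conjZ raddfB /= mxtraceZ tr_sigma.
    by rewrite mxtrace_diag_conj sumD mulr0 subr0.
- by rewrite /sigma /rho -diag_conjB subKr diag_conjZ scalerA mulfV // scale1r.
Qed.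

End DiagConj.

Lemma at_least_pos_eigs_sub_psd k n (S T : 'M[C]_n) :
  hermitian S -> psd T -> at_least_pos_eigs k (S - T) -> (k <= \rank S)%N.
Proof.
move=> HS [HT T_ge0].
have [P [D [Pu _ XE]]] := hermitian_spectral (hermitianB HS HT).
rewrite XE (at_least_pos_eigs_diag_conj Pu) => posD.
rewrite leqNgt; apply/negP => rankS.
have [v Sv] := ker_pos_qform Pu (leq_trans rankS posD).
by rewrite -XE qformB (qform_ker Sv) sub0r oppr_gt0 => /lt_geF; rewrite (T_ge0 v).
Qed.

Lemma povm_mxtrace d m (P : 'I_m -> 'M[C]_d) (X : 'M[C]_d) :
  povm P -> \tr X = \sum_j \tr (X *m P j).
Proof. by move=> [_ sumP]; rewrite -raddf_sum -mulmx_sumr sumP mulmx1. Qed.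

Lemma mxtrace_ker_MQ d l m (Q : 'I_l -> 'I_m -> 'M[C]_d) (X : 'M[C]_d) :
  (0 < l)%N -> scheme Q -> MQ Q X = 0 -> \tr X = 0.
Proof.
move=> l_gt0 hQ MX0; pose i0 := Ordinal l_gt0.
rewrite (povm_mxtrace X (hQ i0)) big1 // => j _.
by have /matrixP/(_ i0 j) := MX0; rewrite !mxE.
Qed.

Lemma MQB d l m (Q : 'I_l -> 'I_m -> 'M[C]_d) (A B : 'M[C]_d) :
  MQ Q (A - B) = MQ Q A - MQ Q B.
Proof. by apply/matrixP => i j; rewrite !mxE mulmxBl linearB. Qed.

Lemma MQZ d l m (Q : 'I_l -> 'I_m -> 'M[C]_d) (a : C) (A : 'M[C]_d) :
  MQ Q (a *: A) = a *: MQ Q A.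
Proof. by apply/matrixP => i j; rewrite !mxE -scalemxAl mxtraceZ. Qed.

End QuantumStates.

Theorem proposition1 (R : realType) (d l m : nat)
  (hd : (1 <= d)%N) (hl : (1 <= l)%N) (hm : (1 <= m)%N)
  (Q : 'I_l -> 'I_m -> 'M[R[i]]_d) (hQ : scheme Q) :
  determines_pure Q <->
  (forall X : 'M[R[i]]_d, in_ker_MQ Q X -> X != 0 -> at_least_pos_eigs 2 X).
Proof.
split=> [det X [HX MX0] X0 | pos2 sigma rho [[[Hsigma _] _] rank1] [Prho _] Msr].
- have [P [D [Pu Dreal XE]]] := hermitian_spectral HX.
  rewrite XE (at_least_pos_eigs_diag_conj Pu) ltnNge; apply/negP => pos1.
  have sumD : \sum_i D 0 i = 0.
    by rewrite -(mxtrace_diag_conj Pu) -XE (mxtrace_ker_MQ hl hQ MX0).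
  have D0 : D != 0.
    by apply: contraNneq X0 => D0; rewrite XE D0 -(scale0r 0) diag_conjZ scale0r.
  have [a [sigma [rho [a0 Psigma Srho XE']]]] :=
    pure_sub_state_decomposition Pu Dreal sumD D0 pos1.
  have Msr : MQ Q sigma = MQ Q rho.
    move/eqP: MX0; rewrite XE XE' MQZ MQB scaler_eq0 (negbTE a0) subr_eq0.
    by move/eqP.
  by case/eqP: X0; rewrite XE XE' (det _ _ Psigma Srho Msr) subrr scaler0.
- have [//|rho_sigma] := eqVneq rho sigma.
  have X0 : sigma - rho != 0 by rewrite subr_eq0 eq_sym.
  have ker : in_ker_MQ Q (sigma - rho).
    by split; [exact: hermitianB Prho.1 | rewrite MQB Msr subrr].
  have := at_least_pos_eigs_sub_psd Hsigma Prho (pos2 _ ker X0).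
  by rewrite rank1.
Qed.
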